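(* Let $\mathbf w=\mathbf w^{H,\mathbf S_r}_{\mathbf b}$ be a binary subspace chirp of rank $r$ with parameters $H\in\mathcal G(m,r;2)$, $\mathbf S_r\in\mathrm{Sym}(r;2)$, $\mathbf b\in\mathbb F_2^m$. For $\mathbf x,\mathbf y\in\mathbb F_2^m$ we have $\mathbf w^\dagger\mathbf E(\mathbf x,\mathbf y)\mathbf w\neq0$ if and only if $\mathbf x\in H$ and, writing $\mathbf x=\mathbf H_{\mathcal I}\mathbf z$ with $\mathbf z\in\mathbb F_2^r$, one has $\mathbf H_{\mathcal I}^T\mathbf y=\mathbf S_r\mathbf z$; equivalently $\mathbf y\in\{\tilde{\mathbf H}_{\mathcal I}\mathbf v+\mathbf I_{\mathcal I}\mathbf S_r\mathbf z:\mathbf v\in\mathbb F_2^{m-r}\}$. In particular $\mathbf w^\dagger\mathbf E(\mathbf 0,\mathbf y)\mathbf w\neq0$ if and only if $\mathbf y$ lies in the column space of $\tilde{\mathbf H}_{\mathcal I}$, which equals $H^{\perp}=\{\mathbf y:\mathbf y^T\mathbf h=0\ \forall\mathbf h\in H\}$.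
   Context: Fix $m\ge1$, $N=2^m$. Binary vectors are columns over $\mathbb F_2$; $\mathrm{Sym}(r;2)$ is the set of symmetric binary $r\times r$ matrices, $\mathcal G(m,r;2)$ the set of $r$-dimensional subspaces of $\mathbb F_2^m$. The standard basis of $\mathbb C^N=(\mathbb C^2)^{\otimes m}$ is $\{\mathbf e_{\mathbf v}=\mathbf e_{v_1}\otimes\cdots\otimes\mathbf e_{v_m}:\mathbf v\in\mathbb F_2^m\}$ and vectors of $\mathbb C^N$ are indexed by $\mathbb F_2^m$; $\dagger$ is conjugate transpose. Whenever a binary expression appears in an exponent of $i$, binary entries are lifted to the integers $0,1$ and the expression is evaluated in $\mathbb Z$ (equivalently mod 4). Pauli matrices: $\sigma_x=\begin{pmatrix}0&1\\1&0\end{pmatrix}$, $\sigma_z=\begin{pmatrix}1&0\\0&-1\end{pmatrix}$; for $\mathbf a,\mathbf b\in\mathbb F_2^m$, $\mathbf D(\mathbf a,\mathbf b)=\sigma_x^{a_1}\sigma_z^{b_1}\otimes\cdots\otimes\sigma_x^{a_m}\sigma_z^{b_m}$ and $\mathbf E(\mathbf a,\mathbf b)=i^{\mathbf a^T\mathbf b}\mathbf D(\mathbf a,\mathbf b)$. Echelon data: for $0\le r\le m$ and $H\in\mathcal G(m,r;2)$, let $\mathbf H_{\mathcal I}$ be the unique $m\times r$ binary matrix in column reduced echelon form with column space $H$: there are indices $i_1<\dots<i_r$, $\mathcal I=\{i_1,\dots,i_r\}$, such that rows $i_1,\dots,i_r$ of $\mathbf H_{\mathcal I}$ form $\mathbf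 I_r$ and column $j$ of $\mathbf H_{\mathcal I}$ is zero in all rows above row $i_j$. Let $\mathbf I_{\mathcal I}$ (resp. $\mathbf I_{\tilde{\mathcal I}}$) be the $m\times r$ (resp. $m\times(m-r)$) matrix whose columns are the standard basis vectors $\mathbf e_i$ with $i\in\mathcal I$ (resp. $i\notin\mathcal I$), in increasing order of $i$. Put $\mathbf P_{\mathcal I}=[\mathbf H_{\mathcal I}\ \ \mathbf I_{\tilde{\mathcal I}}]\in\mathrm{GL}(m;2)$, and define the $m\times(m-r)$ matrix $\tilde{\mathbf H}_{\mathcal I}$ by $\mathbf P_{\mathcal I}^{-T}=[\mathbf I_{\mathcal I}\ \ \tilde{\mathbf H}_{\mathcal I}]$. (For $r=0$: $H=\{0\}$, $\mathbf P_{\mathcal I}=\mathbf I_m$.) For $\mathbf S_r\in\mathrm{Sym}(r;2)$, $\tilde{\mathbf S}_r\in\mathrm{Sym}(m;2)$ denotes the matrix with $\mathbf S_r$ as its upper-left $r\times r$ block and zeros elsewhere. Binary subspace chirps: let $f(\mathbf v,\mathbf w,r)=\prod_{i=r+1}^m(1+v_i+w_i)$ computed in $\mathbb F_2$ and viewed in $\{0,1\}$ (so $f=1$ iff $\mathbf v,\mathbf w$ agree in their last $m-r$ coordinates). For $\mathbf b\in\mathbb F_2^m$, the binary subspace chirp (BSSC) $\mathbf w_{\mathbf b}=\mathbf w^{H,\mathbf S_r}_{\mathbf b}\in\mathbb C^N$ has entries $\mathbf w_{\mathbf b}(\mathbf a)=2^{-r/2}\,i^{\mathbf u^T\tilde{\mathbf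 S}_r\mathbf u+2\mathbf b^T\mathbf u}\,f(\mathbf b,\mathbf u,r)$ with $\mathbf u=\mathbf P_{\mathcal I}^{-1}\mathbf a\in\mathbb F_2^m$, for $\mathbf a\in\mathbb F_2^m$. The integer $r$ is its rank. *)

From HB Require Import structures.
From mathcomp Require Import all_boot all_order all_algebra all_field.
Set Implicit Arguments. Unset Strict Implicit. Unset Printing Implicit Defensive.
Import Order.TTheory GRing.Theory Num.Theory.
Local Open Scope ring_scope.

Definition lift2 (x : 'F_2) : nat := nat_of_ord x.

Definition idx2 (x : 'F_2) : 'I_2 := inord (nat_of_ord x).

Definition sigma_x : 'M[algC]_2 := \matrix_(i < 2, j < 2) (i != j)%:R.
Definition sigma_z : 'M[algC]_2 :=
  \matrix_(i < 2, j < 2) (if i == j then (if nat_of_ord i == 0%N then 1 else -1) else 0).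

(* vectors of C^N, N = 2^m, indexed by F_2^m; operators as kernels *)
Definition cvec (m : nat) := 'cV['F_2]_m -> algC.
Definition cop (m : nat) := 'cV['F_2]_m -> 'cV['F_2]_m -> algC.

(* D(a,b) = tensor product of sigma_x^{a_i} sigma_z^{b_i}; the entry at
   (e_u, e_v) of a tensor product is the product of the factor entries *)
Definition Dop (m : nat) (a b : 'cV['F_2]_m) : cop m :=
  fun u v => \prod_(i < m)
     ((sigma_x ^+ lift2 (a i ord0) *m sigma_z ^+ lift2 (b i ord0))
        (idx2 (u i ord0)) (idx2 (v i ord0))).

Definition zdot (m : nat) (a b : 'cV['F_2]_m) : nat :=
  (\sum_(i < m) lift2 (a i ord0) * lift2 (b i ord0))%N.

Definition Eop (m : nat) (a b : 'cV['F_2]_m) : cop m :=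
  fun u v => 'i ^+ zdot a b * Dop a b u v.

Definition quadf (m : nat) (w : cvec m) (A : cop m) : algC :=
  \sum_(u : 'cV['F_2]_m) \sum_(v : 'cV['F_2]_m) (w u)^* * A u v * w v.

Definition col_reduced_echelon (m r : nat) (HI : 'M['F_2]_(m, r))
    (piv : 'I_r -> 'I_m) : Prop :=
  [/\ forall j k : 'I_r, (j < k)%N -> (piv j < piv k)%N,
      forall k j : 'I_r, HI (piv k) j = (k == j)%:R
    & forall (i : 'I_m) (j : 'I_r), (i < piv j)%N -> HI i j = 0].

Definition colspace (m r : nat) (M : 'M['F_2]_(m, r)) : {set 'cV['F_2]_m} :=
  [set M *m z | z : 'cV['F_2]_r].

(* indices not in I, in increasing order *)
Definition compl_idx (m r : nat) (piv : 'I_r -> 'I_m) : seq 'I_m :=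
  enum [set i : 'I_m | i \notin [seq piv j | j : 'I_r]].

Definition I_I (m r : nat) (piv : 'I_r -> 'I_m) : 'M['F_2]_(m, r) :=
  \matrix_(i < m, j < r) (i == piv j)%:R.

(* I_{~I} : columns e_i, i notin I, increasing; the default of nth is never used *)
Definition I_Ic (m r : nat) (piv : 'I_r -> 'I_m) : 'M['F_2]_(m, m - r) :=
  \matrix_(i < m, k < m - r) (i == nth i (compl_idx piv) k)%:R.

(* P_I = [H_I  I_{~I}] *)
Definition P_I (m r : nat) (HI : 'M['F_2]_(m, r)) (piv : 'I_r -> 'I_m)
  : 'M['F_2]_m :=
  \matrix_(i < m, j < m)
    match @insub _ (fun n => (n < r)%N) 'I_r (nat_of_ord j) with
    | Some j' => HI i j'
    | None =>
      match @insub _ (fun n => (n < m - r)%N) 'I_(m - r) (nat_of_ord j - r)%N with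
      | Some k => I_Ic piv i k
      | None => 0
      end
    end.

(* ~H_I = last m - r columns of P_I^{-T} *)
Definition Htil (m r : nat) (HI : 'M['F_2]_(m, r)) (piv : 'I_r -> 'I_m)
  : 'M['F_2]_(m, m - r) :=
  \matrix_(i < m, k < m - r)
    match @insub _ (fun n => (n < m)%N) 'I_m (r + nat_of_ord k)%N with
    | Some j => (invmx (P_I HI piv))^T i j
    | None => 0
    end.

(* ~S_r : S_r in the upper-left block, zeros elsewhere *)
Definition Stil (m r : nat) (S : 'M['F_2]_r) : 'M['F_2]_m :=
  \matrix_(i < m, j < m)
    match @insub _ (fun n => (n < r)%N) 'I_r (nat_of_ord i),
          @insub _ (fun n => (n < r)%N) 'I_r (nat_of_ord j) with
    | Some i', Some j' => S i' j'
    | _, _ => 0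
    end.

(* f(v,w,r) = prod_{i=r+1}^m (1 + v_i + w_i) in F_2 (1-based indices) *)
Definition fagree (m : nat) (v w : 'cV['F_2]_m) (r : nat) : 'F_2 :=
  \prod_(i < m | (r <= i)%N) (1 + v i ord0 + w i ord0).

Definition zquad (m : nat) (M : 'M['F_2]_m) (u : 'cV['F_2]_m) : nat :=
  (\sum_(i < m) \sum_(j < m) lift2 (u i ord0) * lift2 (M i j) * lift2 (u j ord0))%N.

Definition bssc (m r : nat) (HI : 'M['F_2]_(m, r)) (piv : 'I_r -> 'I_m)
    (S : 'M['F_2]_r) (b : 'cV['F_2]_m) : cvec m :=
  fun a =>
    let u := invmx (P_I HI piv) *m a in
    (sqrtC 2) ^- r * 'i ^+ (zquad (Stil m S) u + 2 * zdot b u)%N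
      * (lift2 (fagree b u r))%:R.

Definition perp (m : nat) (H : {set 'cV['F_2]_m}) : {set 'cV['F_2]_m} :=
  [set y | [forall h in H, (y^T *m h) ord0 ord0 == 0]].

From HB Require Import structures.
From mathcomp Require Import all_boot all_order all_algebra all_field.
From mathcomp Require Import ring zify.
Import Order.TTheory GRing.Theory Num.Theory.
Local Open Scope ring_scope.

(* Write w = w_b^{H,S_r} and change coordinates by u = P_I^{-1} a.  In these
   coordinates w is, up to the factor 2^(-r/2), a unimodular quadratic phase
   i^(u^T ~S_r u) (-1)^(b^T u) times the indicator of the coset
   {u | u agrees with b on the coordinates r, ..., m - 1}.  Since
   E(x, y) e_v = i^(x.y) (-1)^(y.v) e_(v + x), the expectation w^dagger E(x,y) w
   is an autocorrelation of w shifted by t = P_I^{-1} x.  It vanishes unless t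
   is supported on the first r coordinates (i.e. x = H_I z lies in H); in that
   case the quadratic phase turns the autocorrelation into a character sum over
   the coset, which is nonzero exactly when ~S_r t + P_I^T y vanishes on the
   first r coordinates, i.e. H_I^T y = S_r z.  Finally P_I^{-T} = [I_I ~H_I]
   identifies the solutions of H_I^T y = s with ~H_I F_2^(m-r) + I_I s and the
   column space of ~H_I with H^perp. *)

Lemma F2_cases (x : 'F_2) : x = 0 \/ x = 1.
Proof. by case: x => [[|[|n]] hn]; [left|right|]; try apply: val_inj. Qed.

Lemma F2_pchar : 2 \in [pchar 'F_2].
Proof. exact: (@pchar_Fp 2). Qed.

Lemma lift2M (x y : 'F_2) : lift2 (x * y) = (lift2 x * lift2 y)%N.
Proof. by case: (F2_cases x) => ->; case: (F2_cases y) => ->; rewrite ?mul0r ?mulr0 ?mulr1. Qed.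

(* The sign character of (F_2, +): sg x = (-1)^x.  It turns F_2-sums into
   products of signs and is the bridge between binary and complex arithmetic. *)
Definition sg (x : 'F_2) : algC := (-1) ^+ lift2 x.

Lemma sgD (x y : 'F_2) : sg (x + y) = sg x * sg y.
Proof.
by case: (F2_cases x) => ->; case: (F2_cases y) => ->;
  rewrite ?(addrr_pchar2 F2_pchar) /sg /= ?expr0 ?expr1 ?mulr1 ?mul1r ?mulrNN ?mulr1.
Qed.

Lemma sg_sum (I : finType) (F : I -> 'F_2) : sg (\sum_i F i) = \prod_i sg (F i).
Proof. exact: (big_morph sg sgD). Qed.

Lemma sg_neq0 (x : 'F_2) : sg x != 0.
Proof. by rewrite expf_neq0 // oppr_eq0 oner_eq0. Qed.

Lemma sg_sqr (x : 'F_2) : sg x * sg x = 1.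
Proof. by rewrite -sgD (addrr_pchar2 F2_pchar). Qed.

Lemma sg_conj (x : 'F_2) : (sg x)^* = sg x.
Proof. by rewrite rmorphXn rmorphN rmorph1. Qed.

Lemma m1_exp_sum (I : finType) (F : I -> nat) :
  (-1 : algC) ^+ (\sum_i F i)%N = \prod_i (-1) ^+ F i.
Proof. by apply: (big_morph _ (exprD _)); rewrite expr0. Qed.

Lemma zdot_sg (m : nat) (a b : 'cV['F_2]_m) :
  (-1 : algC) ^+ zdot a b = sg ((a^T *m b) ord0 ord0).
Proof.
rewrite /zdot m1_exp_sum mxE sg_sum; apply: eq_bigr => i _.
by rewrite mxE /sg lift2M.
Qed.

Lemma dot_sum (m : nat) (u g : 'cV['F_2]_m) :
  (u^T *m g) ord0 ord0 = \sum_k u k ord0 * g k ord0.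
Proof. by rewrite mxE; apply: eq_bigr => k _; rewrite mxE. Qed.

Lemma idx2_0 : idx2 0 = ord0. Proof. by apply: val_inj; rewrite /= inordK. Qed.
Lemma idx2_1 : idx2 1 = lift ord0 ord0. Proof. by apply: val_inj; rewrite /= inordK. Qed.

Lemma pauli_entry (p q s t : 'F_2) :
  (sigma_x ^+ lift2 p *m sigma_z ^+ lift2 q) (idx2 s) (idx2 t)
  = (s == t + p)%:R * sg (q * t).
Proof.
case: (F2_cases p) => ->; case: (F2_cases q) => ->;
case: (F2_cases s) => ->; case: (F2_cases t) => ->;
rewrite /= ?expr0 ?expr1 ?mul1mx ?mulmx1 ?idx2_0 ?idx2_1 /sigma_x /sigma_z !mxE
  ?big_ord_recl ?big_ord0 ?mxE /sg /=
  ?(add0r, addr0, addrr_pchar2 F2_pchar, mul0r, mulr0, mulr1, mul1r, expr0, expr1) //.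
Qed.

Lemma prod_indicator (m : nat) (F : 'I_m -> bool) :
  \prod_i ((F i)%:R : algC) = ([forall i, F i])%:R.
Proof.
case: (boolP [forall i, F i]) => [/forallP hF|/forallPn [i hi]].
  by apply: big1 => i _; rewrite hF.
by rewrite (bigD1 i) //= (negbTE hi) mul0r.
Qed.

Lemma Dop_entry (m : nat) (a b u v : 'cV['F_2]_m) :
  Dop a b u v = (u == v + a)%:R * sg ((b^T *m v) ord0 ord0).
Proof.
rewrite /Dop; under eq_bigr do rewrite pauli_entry.
rewrite big_split /= prod_indicator dot_sum sg_sum.
have -> : [forall i, u i ord0 == v i ord0 + a i ord0] = (u == v + a).
  apply/forallP/eqP => [hu|-> i]; last by rewrite !mxE.
  by apply/matrixP => i j; rewrite (ord1 j) !mxE; apply/eqP.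
by [].
Qed.

Lemma quadf_Eop (m : nat) (w : cvec m) (x y : 'cV['F_2]_m) :
  quadf w (Eop x y) =
  'i ^+ zdot x y * \sum_v (w (v + x))^* * sg ((y^T *m v) ord0 ord0) * w v.
Proof.
rewrite /quadf exchange_big mulr_sumr; apply: eq_bigr => v _.
rewrite (bigD1 (v + x)) //= big1 ?addr0 => [|u /negbTE hu].
  by rewrite /Eop Dop_entry eqxx mul1r; ring.
by rewrite /Eop Dop_entry hu !(mul0r, mulr0).
Qed.

(* For a symmetric binary matrix M, the phase i^(u^T M u) (exponent computed over
   the integers) is a quadratic function of u: its defect under translation is
   the sign of the F_2 bilinear form u^T M t.  The proof expands the integer
   lift (u + t) = u + t - 2 u*t inside the integer bilinear form of M. *)
Section QuadraticPhase.
Variables (m : nat) (M : 'M['F_2]_m).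
Hypothesis M_sym : M^T = M.

Let lz (x : 'F_2) : int := Posz (lift2 x).

Definition zbil (f g : 'I_m -> int) : int := \sum_i \sum_j f i * lz (M i j) * g j.

Lemma eq_zbil {f f' g g'} :
  f =1 f' -> g =1 g' -> zbil f g = zbil f' g'.
Proof. by move=> hf hg; apply: eq_bigr => i _; apply: eq_bigr => j _; rewrite hf hg. Qed.

Lemma zbil_sym f g : zbil f g = zbil g f.
Proof.
rewrite /zbil exchange_big; apply: eq_bigr => i _; apply: eq_bigr => j _ /=.
by rewrite -[in M j i]M_sym mxE; ring.
Qed.

Lemma zbilDl f1 f2 g : zbil (fun i => f1 i + f2 i) g = zbil f1 g + zbil f2 g.
Proof.
rewrite /zbil -big_split; apply: eq_bigr => i _.
by rewrite -big_split; apply: eq_bigr => j _ /=; ring.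
Qed.

Lemma zbilZl c f g : zbil (fun i => c * f i) g = c * zbil f g.
Proof.
rewrite /zbil mulr_sumr; apply: eq_bigr => i _.
by rewrite mulr_sumr; apply: eq_bigr => j _ /=; ring.
Qed.

Lemma zbilDr f g1 g2 : zbil f (fun i => g1 i + g2 i) = zbil f g1 + zbil f g2.
Proof. by rewrite zbil_sym zbilDl !(zbil_sym f). Qed.

Lemma zbilZr c f g : zbil f (fun i => c * g i) = c * zbil f g.
Proof. by rewrite zbil_sym zbilZl zbil_sym. Qed.

Lemma lzD (x y : 'F_2) : lz (x + y) = lz x + lz y - 2 * (lz x * lz y).
Proof.
by case: (F2_cases x) => ->; case: (F2_cases y) => ->;
  rewrite ?(addrr_pchar2 F2_pchar) ?addr0 ?add0r /lz //=.
Qed.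

Lemma zquadE (u : 'cV['F_2]_m) :
  Posz (zquad M u) = zbil (fun i => lz (u i ord0)) (fun i => lz (u i ord0)).
Proof.
rewrite /zquad /zbil (big_morph Posz PoszD erefl); apply: eq_bigr => i _.
by rewrite (big_morph Posz PoszD erefl); apply: eq_bigr => j _; rewrite !PoszM.
Qed.

(* Exact expansion of the integer quadratic form of u + t; the correction term
   is a multiple of 4, hence invisible in powers of i. *)
Lemma zquadD (u t : 'cV['F_2]_m) :
  let U i := lz (u i ord0) in let T i := lz (t i ord0) in
  let C i := U i * T i in
  Posz (zquad M (u + t)) = Posz (zquad M u) + Posz (zquad M t) + 2 * zbil U T
    + 4 * (zbil C C - zbil C (fun i => U i + T i)).
Proof.
move=> U T C; rewrite !zquadE.
have lift_sum : forall i, lz ((u + t) i ord0) = (U i + T i) + (-2) * C i.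
  by move=> i; rewrite mxE lzD /C; ring.
rewrite (eq_zbil lift_sum lift_sum).
rewrite !(zbilDl, zbilDr, zbilZl, zbilZr) (zbil_sym T U) (zbil_sym C).
rewrite (zbil_sym C T); ring.
Qed.

Lemma sg_zbil (u t : 'cV['F_2]_m) :
  (-1 : algC) ^ zbil (fun i => lz (u i ord0)) (fun i => lz (t i ord0))
  = sg ((u^T *m M *m t) ord0 ord0).
Proof.
have m1_unit : (-1 : algC) \is a GRing.unit by rewrite unitrN1.
rewrite /zbil (big_morph _ (exprzDr m1_unit) (expr0z _)) mxE sg_sum.
under [RHS]eq_bigr do rewrite mxE mulr_suml sg_sum.
rewrite exchange_big; apply: eq_bigr => i _.
rewrite (big_morph _ (exprzDr m1_unit) (expr0z _)); apply: eq_bigr => j _.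
by rewrite mxE -!PoszM -exprnP /sg !lift2M.
Qed.

Lemma ipow_quad (u t : 'cV['F_2]_m) :
  'i ^+ zquad M (u + t) = 'i ^+ zquad M u * 'i ^+ zquad M t * sg ((u^T *m M *m t) ord0 ord0).
Proof.
have i_unit : ('i : algC) \is a GRing.unit by rewrite unitfE neq0Ci.
rewrite !exprnP zquadD !exprzDr // -!exprz_exp -sg_zbil.
have i4 : ('i : algC) ^ 4 = 1 by rewrite -(exprnP _ 4) (exprM _ 2 2) sqrCi sqrrN expr1n.
by rewrite -(exprnP _ 2) sqrCi i4 exp1rz mulr1.
Qed.

End QuadraticPhase.

Definition agrees {m : nat} (r : nat) (b u : 'cV['F_2]_m) : bool :=
  [forall i : 'I_m, (r <= i)%N ==> (u i ord0 == b i ord0)].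

Definition coset_sum {m : nat} (r : nat) (b g : 'cV['F_2]_m) : algC :=
  \sum_u (agrees r b u)%:R * sg ((u^T *m g) ord0 ord0).

Section CosetSum.
Variables (m r : nat) (b g : 'cV['F_2]_m).

(* If g_i = 1 for a free coordinate i, translating by e_i flips every term. *)
Lemma coset_sum_vanish (i : 'I_m) :
  (i < r)%N -> g i ord0 != 0 -> coset_sum r b g = 0.
Proof.
move=> ir gi_neq0; set e : 'cV['F_2]_m := delta_mx i ord0.
have agrees_shift u : agrees r b (u + e) = agrees r b u.
  apply: eq_forallb => j; case: (leqP r j) => //= rj.
  rewrite !mxE (_ : (j == i) = false) ?addr0 //.
  by apply/negbTE; rewrite neq_ltn (leq_trans ir rj) orbT.
have e_dot : (e^T *m g) ord0 ord0 = 1.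
  rewrite dot_sum (bigD1 i) //= big1 => [|k /negbTE ki]; last by rewrite !mxE ki mul0r.
  have [gi0|->] := F2_cases (g i ord0); first by rewrite gi0 eqxx in gi_neq0.
  by rewrite !mxE !eqxx mul1r addr0.
have antisym : coset_sum r b g = - coset_sum r b g.
  rewrite {1}/coset_sum (reindex_inj (addIr e)) /= -sumrN.
  apply: eq_bigr => u _; rewrite agrees_shift linearD mulmxDl mxE sgD e_dot.
  by rewrite /sg expr1 mulrN1 mulrN.
have : coset_sum r b g *+ 2 == 0 by rewrite mulr2n {2}antisym subrr.
by rewrite -mulr_natl mulf_eq0 pnatr_eq0 => /eqP.
Qed.

(* Otherwise every term equals sg(b^T g), and the coset is nonempty. *)
Lemma coset_sum_const :
  (forall i : 'I_m, (i < r)%N -> g i ord0 = 0) -> coset_sum r b g != 0.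
Proof.
move=> g_low.
have -> : coset_sum r b g = \sum_u (agrees r b u)%:R * sg ((b^T *m g) ord0 ord0).
  apply: eq_bigr => u _; case: (boolP (agrees r b u)) => [/forallP ub|]; last by rewrite !mul0r.
  congr (_ * sg _); rewrite !dot_sum; apply: eq_bigr => k _.
  case: (ltnP k r) => kr; first by rewrite g_low // !mulr0.
  by move: (ub k); rewrite kr => /eqP ->.
rewrite -mulr_suml mulf_neq0 ?sg_neq0 // -natr_sum pnatr_eq0 -lt0n.
have agrees_b : agrees r b b by apply/forallP => i; rewrite eqxx implybT.
by rewrite (bigD1 b) //= agrees_b.
Qed.

Lemma coset_sum_neq0 :
  coset_sum r b g != 0 <-> forall i : 'I_m, (i < r)%N -> g i ord0 = 0.
Proof.
split=> [sum_neq0 i ir|]; last exact: coset_sum_const.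
apply/eqP; apply: contraNT sum_neq0 => gi_neq0.
by rewrite (coset_sum_vanish _ ir gi_neq0).
Qed.

End CosetSum.

Lemma sum_delta_r {R : nzRingType} {I : finType} (F : I -> R) (a : I) :
  \sum_j F j * (j == a)%:R = F a.
Proof.
rewrite (bigD1 a) //= eqxx mulr1 big1 ?addr0 // => j /negbTE ja.
by rewrite ja mulr0.
Qed.

Lemma sum_delta_l {R : nzRingType} {I : finType} (F : I -> R) (a : I) :
  \sum_j (j == a)%:R * F j = F a.
Proof.
rewrite -[RHS](sum_delta_r F a); apply: eq_bigr => j _.
by case: (j == a); rewrite ?mul1r ?mul0r ?mulr1 ?mulr0.
Qed.

Lemma insub_ord {n k : nat} (h : (k < n)%N) : insub k = Some (Ordinal h).
Proof.
case: insubP => [u _ hu|]; first by congr Some; apply: val_inj.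
by rewrite h.
Qed.

Lemma insub_ord_none (n k : nat) (h : (n <= k)%N) :
  @insub _ (fun x => (x < n)%N) 'I_n k = None.
Proof. by case: insubP => // u; rewrite ltnNge h. Qed.

Lemma F2mx_opp (n k : nat) (A : 'M['F_2]_(n, k)) : - A = A.
Proof. by apply/matrixP => i j; rewrite mxE (oppr_pchar2 F2_pchar). Qed.

(* We only use that the pivot rows of H_I
   form the identity.  Coordinates of F_2^m are split as the first r ones
   (colL) and the last m - r ones (colR); E1, E2 are the corresponding
   coordinate embeddings, so that P_I = H_I E1^T + I_{~I} E2^T. *)
Section EchelonBasis.
Variables (m r : nat) (HI : 'M['F_2]_(m, r)) (piv : 'I_r -> 'I_m).
Hypothesis HI_piv : forall k j : 'I_r, HI (piv k) j = (k == j)%:R.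

Lemma piv_inj : injective piv.
Proof.
move=> k k' ekk'; apply/eqP; rewrite eq_sym; apply/negPn/negP => kk'.
by have := HI_piv k k; rewrite ekk' HI_piv (negbTE kk') eqxx => /(congr1 val).
Qed.

Lemma r_le_m : (r <= m)%N.
Proof. by have := leq_card _ piv_inj; rewrite !card_ord. Qed.

Definition colL (j : 'I_r) : 'I_m := widen_ord r_le_m j.
Lemma colR_proof (l : 'I_(m - r)) : (r + l < m)%N.
Proof. by rewrite -ltn_subRL. Qed.
Definition colR (l : 'I_(m - r)) : 'I_m := Ordinal (colR_proof l).

Lemma colL_eq a b : (colL a == colL b) = (a == b).
Proof. by []. Qed.
Lemma colR_eq a b : (colR a == colR b) = (a == b).
Proof. by rewrite /colR /eq_op /= eqn_add2l. Qed.
Lemma colLR a b : (colL a == colR b) = false.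
Proof. by rewrite /colL /colR /eq_op /=; apply/negbTE; rewrite neq_ltn ltn_addr. Qed.
Lemma colRL a b : (colR b == colL a) = false.
Proof. by rewrite eq_sym colLR. Qed.

Lemma colLRP (k : 'I_m) : {j | k = colL j} + {l | k = colR l}.
Proof.
case: (ltnP k r) => kr; first by left; exists (Ordinal kr); apply: val_inj.
have kr' : (k - r < m - r)%N by have := ltn_ord k; lia.
by right; exists (Ordinal kr'); apply: val_inj => /=; lia.
Qed.

Definition E1 : 'M['F_2]_(m, r) := \matrix_(i, j) (i == colL j)%:R.
Definition E2 : 'M['F_2]_(m, m - r) := \matrix_(i, j) (i == colR j)%:R.

Lemma E1tE1 : E1^T *m E1 = 1%:M.
Proof.
apply/matrixP => a b; rewrite !mxE; under eq_bigr do rewrite !mxE.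
by rewrite sum_delta_l colL_eq.
Qed.

Lemma E1tE2 : E1^T *m E2 = 0.
Proof.
apply/matrixP => a b; rewrite !mxE; under eq_bigr do rewrite !mxE.
by rewrite sum_delta_l colLR.
Qed.

Lemma E1E1_E2E2 : E1 *m E1^T + E2 *m E2^T = 1%:M.
Proof.
apply/matrixP => a b; rewrite !mxE; under eq_bigr do rewrite !mxE.
under [X in _ + X = _]eq_bigr do rewrite !mxE.
case: (colLRP a) => [[j ->]|[l ->]].
  rewrite (eq_bigr (fun j' => (j' == j)%:R * (b == colL j')%:R)) => [|j' _]; last by rewrite colL_eq eq_sym.
  by rewrite sum_delta_l big1 ?addr0 1?eq_sym // => l _; rewrite colLR mul0r.
rewrite big1 ?add0r => [|j _]; last by rewrite colRL mul0r.
rewrite (eq_bigr (fun l' => (l' == l)%:R * (b == colR l')%:R)) => [|l' _]; last by rewrite colR_eq eq_sym.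
by rewrite sum_delta_l eq_sym.
Qed.

Lemma E1_supp (z : 'cV['F_2]_r) (i : 'I_m) : (r <= i)%N -> (E1 *m z) i ord0 = 0.
Proof.
move=> ri; rewrite mxE big1 // => j _; rewrite mxE.
suff /negbTE -> : i != colL j by rewrite mul0r.
by rewrite neq_ltn /= (leq_trans (ltn_ord j) ri) orbT.
Qed.

Lemma supp_E1 (t : 'cV['F_2]_m) : (forall i : 'I_m, (r <= i)%N -> t i ord0 = 0) ->
  t = E1 *m (E1^T *m t).
Proof.
move=> t_low.
have E2t : E2^T *m t = 0.
  apply/matrixP => l k; rewrite (ord1 k) !mxE.
  under eq_bigr do rewrite [E2^T _ _]mxE [E2 _ _]mxE.
  by rewrite sum_delta_l t_low //= leq_addr.
by rewrite mulmxA -[LHS]mul1mx -E1E1_E2E2 mulmxDl -[E2 *m _ *m t]mulmxA E2t mulmx0 addr0.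
Qed.

Lemma E1t_col (g : 'cV['F_2]_m) j : (E1^T *m g) j ord0 = g (colL j) ord0.
Proof.
rewrite mxE; under eq_bigr do rewrite [E1^T _ _]mxE [E1 _ _]mxE.
by rewrite sum_delta_l.
Qed.

Lemma E1t_eq0 (g : 'cV['F_2]_m) :
  (forall i : 'I_m, (i < r)%N -> g i ord0 = 0) <-> E1^T *m g = 0.
Proof.
split=> [g_low|g_low i ir].
  by apply/matrixP => j k; rewrite (ord1 k) E1t_col mxE g_low //; exact: (ltn_ord j).
have -> : i = colL (Ordinal ir) by apply: val_inj.
by rewrite -E1t_col g_low mxE.
Qed.

Definition P := P_I HI piv.

Lemma PL i j : P i (colL j) = HI i j.
Proof. by rewrite /P /P_I mxE (insub_ord (ltn_ord j)); congr (HI i _); apply: val_inj. Qed.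

Lemma PR i l : P i (colR l) = I_Ic piv i l.
Proof.
rewrite /P /P_I mxE /= insub_ord_none ?leq_addr //.
have h : (r + l - r < m - r)%N by rewrite addKn.
by rewrite (insub_ord h); congr (I_Ic piv i _); apply: val_inj => /=; rewrite addKn.
Qed.

Lemma PE1 : P *m E1 = HI.
Proof.
apply/matrixP => i j; rewrite mxE; under eq_bigr do rewrite [E1 _ _]mxE.
by rewrite sum_delta_r PL.
Qed.

Lemma PE2 : P *m E2 = I_Ic piv.
Proof.
apply/matrixP => i j; rewrite mxE; under eq_bigr do rewrite [E2 _ _]mxE.
by rewrite sum_delta_r PR.
Qed.

Lemma P_decomp : P = HI *m E1^T + I_Ic piv *m E2^T.
Proof. by rewrite -PE1 -PE2 -!mulmxA -mulmxDr E1E1_E2E2 mulmx1. Qed.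

Lemma size_compl_idx : size (compl_idx piv) = (m - r)%N.
Proof.
rewrite /compl_idx -cardE; set s := [seq piv j | j : 'I_r].
have -> : [set i : 'I_m | i \notin s] = ~: [set i | i \in s] by apply/setP => i; rewrite !inE.
have card_s : #|[set i : 'I_m | i \in s]| = r.
  by rewrite cardsE card_image ?card_ord //; exact: piv_inj.
by rewrite cardsCs setCK card_ord card_s.
Qed.

Definition npiv (l : 'I_(m - r)) : 'I_m := nth (colR l) (compl_idx piv) l.

Lemma npiv_lt (l : 'I_(m - r)) : (l < size (compl_idx piv))%N.
Proof. by rewrite size_compl_idx. Qed.

Lemma piv_npiv j l : (piv j == npiv l) = false.
Proof.
apply/negbTE/eqP => pjl.
have := mem_nth (colR l) (npiv_lt l); rewrite -/(npiv l) -pjl mem_enum inE.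
by rewrite map_f ?mem_enum.
Qed.

Lemma npiv_eq l l' : (npiv l == npiv l') = (l == l').
Proof.
rewrite /npiv (set_nth_default (colR l) (colR l') (npiv_lt l')).
by rewrite nth_uniq ?npiv_lt ?enum_uniq.
Qed.

Lemma I_IcE i l : I_Ic piv i l = (i == npiv l)%:R.
Proof. by rewrite mxE /npiv (set_nth_default (colR l) i (npiv_lt l)). Qed.

Lemma IIt_HI : (I_I piv)^T *m HI = 1%:M.
Proof.
apply/matrixP => a b; rewrite !mxE; under eq_bigr do rewrite !mxE.
by rewrite sum_delta_l HI_piv.
Qed.

Lemma IIt_Ic : (I_I piv)^T *m I_Ic piv = 0.
Proof.
apply/matrixP => a b; rewrite !mxE.
under eq_bigr do rewrite [(I_I piv)^T _ _]mxE [I_I piv _ _]mxE.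
by rewrite sum_delta_l I_IcE piv_npiv.
Qed.

Lemma Ict_Ic : (I_Ic piv)^T *m I_Ic piv = 1%:M.
Proof.
apply/matrixP => a b; rewrite [RHS]mxE mxE.
under eq_bigr do rewrite [(I_Ic piv)^T _ _]mxE !I_IcE.
by rewrite sum_delta_l npiv_eq.
Qed.

Lemma Pt_II : P^T *m I_I piv = E1.
Proof.
apply/matrixP => k j; rewrite mxE [RHS]mxE.
under eq_bigr do rewrite [P^T _ _]mxE [I_I piv _ _]mxE.
rewrite sum_delta_r; case: (colLRP k) => [[j' ->]|[l ->]].
  by rewrite PL HI_piv colL_eq eq_sym.
by rewrite PR I_IcE piv_npiv colRL.
Qed.

(* An explicit left inverse of P_I: the pivot coordinates of a, followed by
   the non-pivot coordinates of a - H_I (a restricted to the pivots). *)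
Definition Pinv_expl : 'M['F_2]_m :=
  E1 *m (I_I piv)^T + E2 *m ((I_Ic piv)^T *m (1%:M - HI *m (I_I piv)^T)).

Lemma Pinv_explP : Pinv_expl *m P = 1%:M.
Proof.
set X := (I_Ic piv)^T *m (1%:M - HI *m (I_I piv)^T).
have IIt_P : (I_I piv)^T *m P = E1^T.
  by rewrite {1}P_decomp mulmxDr !mulmxA IIt_HI IIt_Ic mul1mx mul0mx addr0.
have X_HI : X *m HI = 0.
  by rewrite /X -mulmxA mulmxBl mul1mx -mulmxA IIt_HI mulmx1 subrr mulmx0.
have X_Ic : X *m I_Ic piv = 1%:M.
  by rewrite /X -mulmxA mulmxBl mul1mx -mulmxA IIt_Ic mulmx0 subr0 Ict_Ic.
have X_P : X *m P = E2^T.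
  by rewrite {1}P_decomp mulmxDr !mulmxA X_HI X_Ic mul1mx mul0mx add0r.
rewrite /Pinv_expl -/X mulmxDl -[E1 *m _ *m P]mulmxA -[E2 *m X *m P]mulmxA.
by rewrite IIt_P X_P E1E1_E2E2.
Qed.

Lemma P_unit : P \in unitmx.
Proof. by case: (mulmx1_unit Pinv_explP). Qed.

Lemma PinvP : invmx P *m P = 1%:M. Proof. exact: mulVmx P_unit. Qed.
Lemma PPinv : P *m invmx P = 1%:M. Proof. exact: mulmxV P_unit. Qed.
Lemma PtPinvt : P^T *m (invmx P)^T = 1%:M. Proof. by rewrite -trmx_mul PinvP trmx1. Qed.
Lemma PinvtPt : (invmx P)^T *m P^T = 1%:M. Proof. by rewrite -trmx_mul PPinv trmx1. Qed.

Lemma II_Pinvt : I_I piv = (invmx P)^T *m E1.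
Proof. by rewrite -Pt_II mulmxA PinvtPt mul1mx. Qed.

Lemma Htil_Pinvt : Htil HI piv = (invmx P)^T *m E2.
Proof.
apply/matrixP => i l; rewrite mxE [RHS]mxE.
under [RHS]eq_bigr do rewrite [E2 _ _]mxE.
by rewrite sum_delta_r (insub_ord (colR_proof l)).
Qed.

Lemma HIt_Pt : HI^T = E1^T *m P^T.
Proof. by rewrite -PE1 trmx_mul. Qed.

Lemma HIt_Htil : HI^T *m Htil HI piv = 0.
Proof. by rewrite HIt_Pt Htil_Pinvt mulmxA -(mulmxA _ _ (invmx P)^T) PtPinvt mulmx1 E1tE2. Qed.

Lemma HIt_II : HI^T *m I_I piv = 1%:M.
Proof. by rewrite HIt_Pt II_Pinvt mulmxA -(mulmxA _ _ (invmx P)^T) PtPinvt mulmx1 E1tE1. Qed.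

Lemma HIt_coset (y : 'cV['F_2]_m) (s : 'cV['F_2]_r) :
  HI^T *m y = s <-> exists v, y = Htil HI piv *m v + I_I piv *m s.
Proof.
split=> [<-|[v ->]]; last by rewrite mulmxDr !mulmxA HIt_Htil HIt_II mul0mx mul1mx add0r.
exists (E2^T *m (P^T *m y)).
rewrite HIt_Pt Htil_Pinvt II_Pinvt -!mulmxA addrC -mulmxDr.
rewrite [E1 *m (_ *m _)]mulmxA [E2 *m (_ *m _)]mulmxA -mulmxDl E1E1_E2E2 mul1mx.
by rewrite mulmxA PinvtPt mul1mx.
Qed.

Lemma Pinv_HI (z : 'cV['F_2]_r) : invmx P *m (HI *m z) = E1 *m z.
Proof. by rewrite -PE1 !mulmxA PinvP mul1mx. Qed.

Lemma HI_mul_eq0 (z : 'cV['F_2]_r) : HI *m z = 0 -> z = 0.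
Proof.
by move=> HIz; rewrite -[z]mul1mx -E1tE1 -mulmxA -Pinv_HI HIz !mulmx0.
Qed.

Lemma Htil_colspace_perp : colspace (Htil HI piv) = perp (colspace HI).
Proof.
apply/setP => y.
have -> : (y \in colspace (Htil HI piv)) = (HI^T *m y == 0).
  apply/imsetP/eqP => [[v _ ->]|/HIt_coset [v ->]]; first by rewrite mulmxA HIt_Htil mul0mx.
  by exists v; rewrite ?mulmx0 ?addr0.
have dot_HI (z : 'cV['F_2]_r) : (y^T *m (HI *m z)) ord0 ord0 = ((HI^T *m y)^T *m z) ord0 ord0.
  by rewrite trmx_mul trmxK mulmxA.
rewrite inE; apply/eqP/forall_inP => [HIty _ /imsetP [z _ ->]|orth].
  by rewrite dot_HI HIty trmx0 mul0mx mxE.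
apply/matrixP => j k; rewrite (ord1 k) [RHS]mxE.
have e_HI : HI *m delta_mx j ord0 \in colspace HI by apply/imsetP; exists (delta_mx j ord0).
have := orth _ e_HI.
rewrite dot_HI dot_sum (bigD1 j) //= big1 ?addr0 => [|j' /negbTE jj']; last first.
  by rewrite [delta_mx _ _ _ _]mxE jj' mulr0.
by rewrite [delta_mx _ _ _ _]mxE !eqxx mulr1 mxE => /eqP.
Qed.

Section Chirp.
Variables (S : 'M['F_2]_r) (b : 'cV['F_2]_m).
Hypothesis S_sym : S^T = S.

Let St := Stil m S.
Let w := bssc HI piv S b.

Lemma St_sym : St^T = St.
Proof.
apply/matrixP => i j; rewrite !mxE.
by case: insub => [a|]; case: insub => [a'|] //; rewrite -{1}S_sym mxE.
Qed.

Lemma E1t_St_E1 : E1^T *m St *m E1 = S.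
Proof.
apply/matrixP => j j'; rewrite mxE.
under eq_bigr do rewrite [E1 _ _]mxE [(E1^T *m St) _ _]mxE.
under eq_bigr do under eq_bigr do rewrite [E1^T _ _]mxE [E1 _ _]mxE.
under eq_bigr do rewrite sum_delta_l.
rewrite sum_delta_r /St /Stil mxE /= (insub_ord (ltn_ord j)) (insub_ord (ltn_ord j')).
by congr (S _ _); apply: val_inj.
Qed.

Lemma fagree_agrees (u : 'cV['F_2]_m) :
  ((lift2 (fagree b u r))%:R : algC) = (agrees r b u)%:R.
Proof.
have bit_eq (x y : 'F_2) : 1 + x + y = (x == y)%:R.
  by case: (F2_cases x) => ->; case: (F2_cases y) => ->;
    rewrite ?(addrr_pchar2 F2_pchar) ?addr0 ?add0r ?eqxx //; apply: val_inj.
suff -> : fagree b u r = (agrees r b u)%:R by case: (agrees r b u).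
rewrite /fagree /agrees; under eq_bigr do rewrite bit_eq.
case: (boolP [forall _, _]) => [/forallP ub|/forallPn [i]].
  by apply: big1 => i ri; have := implyP (ub i) ri; rewrite eq_sym => ->.
by rewrite negb_imply => /andP [ri /negbTE ubi]; rewrite (bigD1 i) //= eq_sym ubi mul0r.
Qed.

Definition phase (u : 'cV['F_2]_m) : algC := 'i ^+ zquad St u * sg ((b^T *m u) ord0 ord0).

Lemma phase_unit u : (phase u)^* * phase u = 1.
Proof.
rewrite /phase rmorphM /= sg_conj mulrACA sg_sqr mulr1 mulrC -normCK.
by rewrite normrX normCi !expr1n.
Qed.

Lemma phaseD u t : phase (u + t) = phase u * phase t * sg ((u^T *m St *m t) ord0 ord0).
Proof.
have b_lin : (b^T *m (u + t)) ord0 ord0 = (b^T *m u) ord0 ord0 + (b^T *m t) ord0 ord0.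
  by rewrite mulmxDr mxE.
by rewrite /phase (@ipow_quad _ _ St_sym) b_lin sgD; ring.
Qed.

Definition chirp_norm : algC := (sqrtC 2) ^- r.

Lemma chirp_norm_neq0 : chirp_norm != 0.
Proof. by rewrite invr_eq0 expf_neq0 // sqrtC_eq0 pnatr_eq0. Qed.

Lemma chirp_P u : w (P *m u) = chirp_norm * phase u * (agrees r b u)%:R.
Proof.
rewrite /w /bssc mulmxA PinvP mul1mx.
by rewrite exprD exprM sqrCi zdot_sg fagree_agrees /phase !mulrA.
Qed.

Lemma quadf_P x y : quadf w (Eop x y) = 'i ^+ zdot x y *
  \sum_u (w (P *m (u + invmx P *m x)))^* * sg ((u^T *m (P^T *m y)) ord0 ord0) * w (P *m u).
Proof.
have P_inj : injective (fun u : 'cV['F_2]_m => P *m u).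
  by move=> u v /(congr1 (mulmx (invmx P))); rewrite !mulmxA PinvP !mul1mx.
rewrite quadf_Eop (reindex_inj P_inj) /=; congr (_ * _); apply: eq_bigr => u _.
have -> : (y^T *m (P *m u)) ord0 ord0 = (u^T *m (P^T *m y)) ord0 ord0.
  transitivity ((y^T *m (P *m u))^T ord0 ord0); first by rewrite [RHS]mxE.
  by rewrite !trmx_mul trmxK mulmxA.
by rewrite mulmxDr [P *m (_ *m x)]mulmxA PPinv mul1mx.
Qed.

(* If t = P_I^{-1} x is not supported on the first r coordinates, the
   coset of u + t is disjoint from that of u and the expectation vanishes. *)
Lemma quadf_off_support x y (i : 'I_m) :
  (r <= i)%N -> (invmx P *m x) i ord0 != 0 -> quadf w (Eop x y) = 0.
Proof.
move=> ri ti_neq0; rewrite quadf_P big1 ?mulr0 // => u _.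
rewrite !chirp_P; case: (boolP (agrees r b u)) => [/forallP ub|_]; last by rewrite !mulr0.
suff -> : agrees r b (u + invmx P *m x) = false by rewrite mulr0 rmorph0 !mul0r.
apply/negbTE/forallPn; exists i; rewrite ri /= mxE.
by move: (ub i); rewrite ri => /eqP ->; rewrite -subr_eq0 addrAC subrr add0r.
Qed.

Lemma quadf_on_support x y :
  let t := invmx P *m x in
  (forall i : 'I_m, (r <= i)%N -> t i ord0 = 0) ->
  quadf w (Eop x y) = 'i ^+ zdot x y * ((chirp_norm^* * chirp_norm) * (phase t)^*)
                      * coset_sum r b (St *m t + P^T *m y).
Proof.
move=> t t_low; rewrite quadf_P -/t -[RHS]mulrA; congr (_ * _).
clearbody t; rewrite /coset_sum mulr_sumr; apply: eq_bigr => u _.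
have agrees_shift : agrees r b (u + t) = agrees r b u.
  apply: eq_forallb => i; case: (leqP r i) => //= ri.
  by rewrite mxE t_low // addr0.
have dot_g : (u^T *m (St *m t + P^T *m y)) ord0 ord0
           = (u^T *m St *m t) ord0 ord0 + (u^T *m (P^T *m y)) ord0 ord0.
  by rewrite mulmxDr mxE mulmxA.
rewrite !chirp_P agrees_shift phaseD dot_g sgD.
move: (phase u) (phase_unit u) (phase t) => pu pu_unit pt.
have agr_idem : (agrees r b u)%:R * (agrees r b u)%:R = (agrees r b u)%:R :> algC.
  by case: (agrees r b u); rewrite ?mulr1 ?mulr0.
rewrite !rmorphM /= rmorph_nat sg_conj.
by ring: agr_idem pu_unit.
Qed.

Lemma quadf_neq0 x y : quadf w (Eop x y) != 0 <->
  (forall i : 'I_m, (r <= i)%N -> (invmx P *m x) i ord0 = 0) /\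
  (forall i : 'I_m, (i < r)%N -> (St *m (invmx P *m x) + P^T *m y) i ord0 = 0).
Proof.
split=> [q_neq0|[t_low g_low]].
  have t_low : forall i : 'I_m, (r <= i)%N -> (invmx P *m x) i ord0 = 0.
    move=> i ri; apply/eqP; apply: contraNT q_neq0 => ti_neq0.
    by rewrite (quadf_off_support x y i ri ti_neq0).
  split=> //; apply/(@coset_sum_neq0 m r b); move: q_neq0.
  by rewrite (quadf_on_support x y t_low); apply: contraNneq => ->; rewrite mulr0.
have i_neq0 n : ('i ^+ n : algC) != 0 by rewrite expf_neq0 // neq0Ci.
have phase_neq0 u : phase u != 0 by rewrite mulf_neq0 ?sg_neq0.
rewrite (quadf_on_support x y t_low) mulf_neq0 ?coset_sum_const //.
by rewrite !mulf_neq0 ?i_neq0 ?conjC_eq0 ?chirp_norm_neq0 ?phase_neq0.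
Qed.

Lemma chirp_support x y : quadf w (Eop x y) != 0 <->
  x \in colspace HI /\ exists z : 'cV['F_2]_r, x = HI *m z /\ HI^T *m y = S *m z.
Proof.
have low_eq0 z : E1^T *m (St *m (E1 *m z) + P^T *m y) = 0 <-> HI^T *m y = S *m z.
  rewrite mulmxDr !mulmxA E1t_St_E1 -HIt_Pt; split=> [/eqP|->].
    by rewrite addr_eq0 F2mx_opp eq_sym => /eqP.
  by rewrite -[X in X + _]F2mx_opp addNr.
rewrite quadf_neq0; split=> [[t_low /E1t_eq0 g_low]|[_ [z [-> /low_eq0 g_low]]]].
  set z := E1^T *m (invmx P *m x).
  have x_eq : x = HI *m z by rewrite /z -PE1 -mulmxA -(supp_E1 _ t_low) mulmxA PPinv mul1mx.
  split; first by rewrite x_eq; apply/imsetP; exists z.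
  by exists z; split=> //; apply/low_eq0; rewrite /z -(supp_E1 _ t_low).
rewrite Pinv_HI; split=> [i ri|]; first by rewrite E1_supp.
exact/E1t_eq0.
Qed.

Lemma chirp_support_coset x y : quadf w (Eop x y) != 0 <->
  x \in colspace HI /\ exists z : 'cV['F_2]_r, x = HI *m z /\
    exists v : 'cV['F_2]_(m - r), y = Htil HI piv *m v + I_I piv *m (S *m z).
Proof.
rewrite chirp_support.
by split=> [] [x_HI [z [x_eq y_eq]]]; split=> //; exists z; split=> //; apply/HIt_coset.
Qed.

Lemma chirp_support_Z y : quadf w (Eop 0 y) != 0 <-> y \in colspace (Htil HI piv).
Proof.
rewrite chirp_support; split=> [[_ [z [/esym/HI_mul_eq0 -> /HIt_coset [v ->]]]]|/imsetP [v _ ->]].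
  by rewrite !mulmx0 addr0; apply/imsetP; exists v.
split; first by apply/imsetP; exists 0; rewrite ?mulmx0.
exists 0; split; first by rewrite mulmx0.
by apply/HIt_coset; exists v; rewrite !mulmx0 addr0.
Qed.

End Chirp.

End EchelonBasis.

Theorem mainTheorem6 (m r : nat) (hm : (1 <= m)%N)
    (H : {set 'cV['F_2]_m}) (HI : 'M['F_2]_(m, r)) (piv : 'I_r -> 'I_m)
    (hech : col_reduced_echelon HI piv) (hH : H = colspace HI)
    (S : 'M['F_2]_r) (hS : S^T = S) (b : 'cV['F_2]_m) :
  let w := bssc HI piv S b in
  (forall x y : 'cV['F_2]_m,
     (quadf w (Eop x y) != 0 <->
        x \in H /\ exists z : 'cV['F_2]_r, x = HI *m z /\ HI^T *m y = S *m z)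
     /\
     (quadf w (Eop x y) != 0 <->
        x \in H /\ exists z : 'cV['F_2]_r, x = HI *m z /\
          exists v : 'cV['F_2]_(m - r),
            y = Htil HI piv *m v + I_I piv *m (S *m z)))
  /\
  (forall y : 'cV['F_2]_m,
     quadf w (Eop 0 y) != 0 <-> y \in colspace (Htil HI piv))
  /\ colspace (Htil HI piv) = perp H.
Proof.
case: hech => _ HI_piv _ w; subst H.
split=> [x y|]; first by split; [exact: chirp_support | exact: chirp_support_coset].
split=> [y|]; first exact: chirp_support_Z.
exact: Htil_colspace_perp.
Qed.
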